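(* Let $K:[0,1]\times\mathbb{R}^n\to\mathbb{R}^n$ and $g:[0,1]\to\mathbb{R}^n$ be continuous, and let $X=C([0,1],\mathbb{R}^n)$ with the supremum norm $\|\cdot\|_\infty$. Let $f:[0,\infty)\to(0,\infty)$ be a Lebesgue integrable mapping which is summable (finite integral on each compact subset of $[0,\infty)$) and such that $\int_0^{\varepsilon} f(\lambda)\,d\lambda>0$ for each $\varepsilon>0$. Suppose there exist $\alpha\in(0,\tfrac12]$, $\psi\in\Psi$, $\varphi\in\Phi_u$ and $F\in\mathcal{C}$ such that for all $x,y\in X$ and $t\in[0,1]$, the inequality $\alpha\,\big|x(t)-g(t)-\int_0^t K(s,x(s))\,ds\big|\le |x(t)-y(t)|$ implies $$\psi\Big(\int_0^{|K(t,x(t))-K(t,y(t))|} f(\lambda)\,d\lambda\Big)\le F\Big(\psi\Big(\int_0^{|x(t)-y(t)|} f(\lambda)\,d\lambda\Big),\ \varphi\Big(\int_0^{|x(t)-y(t)|} f(\lambda)\,d\lambda\Big)\Big).$$ Then the integral equation $x(t)=g(t)+\int_0^t K(s,x(s))\,ds$, $t\in[0,1]$, has a unique solution $x\in X$.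
   Context: A $C$-class function is a continuous function $F:[0,\infty)^2\to\mathbb{R}$ such that for all $s,t\in[0,\infty)$: (1) $F(s,t)\le s$; (2) $F(s,t)=s$ implies $s=0$ or $t=0$. $\mathcal{C}$ denotes the class of all $C$-class functions. $\Phi_u$ denotes the class of functions $\varphi:[0,\infty)\to[0,\infty)$ that are continuous, satisfy $\varphi(t)>0$ for $t>0$, and $\varphi(0)\ge 0$. $\Psi$ denotes the set of functions $\psi:[0,\infty)\to[0,\infty)$ that are continuous and strictly increasing with $\psi(t)=0$ if and only if $t=0$. *)

From HB Require Import structures.
From mathcomp Require Import all_boot all_order all_algebra.
From mathcomp Require Import all_classical all_reals all_analysis.
Set Implicit Arguments. Unset Strict Implicit. Unset Printing Implicit Defensive.
Import Order.TTheory GRing.Theory Num.Theory.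
Import numFieldNormedType.Exports.
Local Open Scope classical_set_scope.
Local Open Scope ring_scope.

Section Defs.
Variable R : realType.

Definition enorm (n : nat) (v : 'rV[R]_n) : R :=
  Num.sqrt (\sum_(i < n) (v ord0 i) ^+ 2).

Definition rint (h : R -> R) (a b : R) : R :=
  Rintegral (@lebesgue_measure R) `[a, b] h.

Definition vint (n : nat) (h : R -> 'rV[R]_n) (a b : R) : 'rV[R]_n :=
  \row_(i < n) rint (fun s => h s ord0 i) a b.

Definition C_class (F : R -> R -> R) : Prop :=
  {within [set p : R * R | 0 <= p.1 /\ 0 <= p.2], continuous (fun p => F p.1 p.2)} /\
  (forall s t, 0 <= s -> 0 <= t -> F s t <= s) /\
  (forall s t, 0 <= s -> 0 <= t -> F s t = s -> s = 0 \/ t = 0).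

Definition Phi_u (phi : R -> R) : Prop :=
  {within [set t : R | 0 <= t], continuous phi} /\
  (forall t, 0 <= t -> 0 <= phi t) /\
  (forall t, 0 < t -> 0 < phi t) /\ 0 <= phi 0.

Definition Psi_class (psi : R -> R) : Prop :=
  {within [set t : R | 0 <= t], continuous psi} /\
  (forall t, 0 <= t -> 0 <= psi t) /\
  (forall s t, 0 <= s -> s < t -> psi s < psi t) /\
  (forall t, 0 <= t -> (psi t = 0 <-> t = 0)).

End Defs.

(* The contractive condition forces |K(t,x(t)) - K(t,y(t))| <= |x(t) - y(t)| whenever
   alpha |x(t) - Tx(t)| <= |x(t) - y(t)|, where T x = g + \int_0^. K(s, x(s)) ds:
   otherwise, psi and l |-> \int_0^l f being increasing, the C-class function F would
   attain its bound F(s, t) = s at nonzero arguments.  As alpha <= 1, this trigger holds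
   for every pair (x, T x) and for every pair whose first component is a fixed point.
   Along the Picard iterates it yields |x_(k+1) - x_k| <= M (c t)^k / k!, so they
   converge uniformly to a continuous fixed point; for two fixed points the same
   Gronwall-type iteration forces their distance to vanish. *)

From HB Require Import structures.
From mathcomp Require Import all_boot all_order all_algebra.
From mathcomp Require Import all_classical all_reals all_analysis.
From mathcomp Require Import ring lra.
Set Implicit Arguments. Unset Strict Implicit. Unset Printing Implicit Defensive.
Import Order.TTheory GRing.Theory Num.Theory.
Import numFieldNormedType.Exports.
Local Open Scope classical_set_scope.
Local Open Scope ring_scope.

Section RowNorms.
Variables (R : realType) (n : nat).
Implicit Types v : 'rV[R]_n.

Lemma row_coord_le_norm v i : `|v ord0 i| <= `|v|.
Proof.
by rewrite [leRHS]/Num.norm /= mx_normrE; apply/bigmax_geP; right; exists (ord0, i).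
Qed.

Lemma row_norm_le v c : 0 <= c -> (forall i, `|v ord0 i| <= c) -> `|v| <= c.
Proof.
move=> c0 vc; rewrite [leLHS]/Num.norm /= mx_normrE; apply/bigmax_leP; split=> //.
by move=> [i j] _ /=; rewrite (ord1 i); exact: vc.
Qed.

Lemma enorm_ge0 v : 0 <= enorm v.
Proof. exact: sqrtr_ge0. Qed.

Lemma enorm0 : enorm (0 : 'rV[R]_n) = 0.
Proof. by rewrite /enorm big1 ?sqrtr0 // => i _; rewrite mxE expr0n. Qed.

Lemma row_norm_le_enorm v : `|v| <= enorm v.
Proof.
apply: row_norm_le; first exact: enorm_ge0.
move=> i; rewrite /enorm -sqrtr_sqr ler_sqrt; last by apply: sumr_ge0 => j _; exact: sqr_ge0.
by rewrite (bigD1 i) //= lerDl; apply: sumr_ge0 => j _; exact: sqr_ge0.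
Qed.

(* sqrt n would be sharp; n + 1 avoids square roots. *)
Lemma enorm_le_row_norm v : enorm v <= (n%:R + 1) * `|v|.
Proof.
have n0 : 0 <= n%:R :> R := ler0n _ _.
rewrite /enorm -(ger0_norm (_ : 0 <= (n%:R + 1) * `|v|)); last by rewrite mulr_ge0 ?addr_ge0.
rewrite -sqrtr_sqr ler_sqrt; last exact: sqr_ge0.
apply: (@le_trans _ _ (\sum_(i < n) `|v| ^+ 2)).
  apply: ler_sum => i _; rewrite -real_normK ?num_real //.
  by rewrite lerXn2r ?nnegrE ?row_coord_le_norm.
rewrite sumr_const card_ord -[_ *+ n]mulr_natl exprMn.
by apply: ler_wpM2r; [exact: sqr_ge0 | nra].
Qed.

Lemma cvg_row {T : Type} {F : set_system T} {FF : Filter F}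
    (h : 'I_n -> T -> R) (l : 'I_n -> R) :
  (forall i, h i @ F --> l i) -> (fun x => \row_(i < n) h i x) @ F --> \row_(i < n) l i.
Proof.
move=> hl; apply/cvgrPdist_lt => e e0.
have : \forall x \near F, forall i, `|l i - h i x| < e / 2.
  by apply: filter_forall => i; move/cvgrPdist_lt: (hl i); apply; rewrite divr_gt0.
apply: filterS => x hx.
apply: (@le_lt_trans _ _ (e / 2)); last by rewrite ltr_pdivrMr // ltr_pMr // ltr1n.
apply: row_norm_le; first by rewrite ltW // divr_gt0.
by move=> i; rewrite !mxE; exact: ltW.
Qed.

End RowNorms.

Section CClass.
Variables (R : realType) (psi phi : R -> R) (F : R -> R -> R).
Hypotheses (hpsi : Psi_class psi) (hphi : Phi_u phi) (hF : C_class F).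

Lemma C_class_contractive_lt a b :
  0 <= a -> 0 < b -> psi b <= F (psi a) (phi a) -> b < a.
Proof.
move: hpsi hphi hF => [_ [psi0 [psi_lt psi_eq0]]] [_ [phi0 [phi_gt0 _]]] [_ [F_le F_eq]].
move=> a0 b0 psib; rewrite ltNge; apply/negP => ba.
have Fa := le_trans psib (F_le _ _ (psi0 _ a0) (phi0 _ a0)).
have [a_eq_b | a_ne_b] := eqVneq a b; last first.
  by move: Fa; rewrite leNgt psi_lt // lt_neqAle a_ne_b ba.
subst b.
have : F (psi a) (phi a) = psi a by apply/eqP; rewrite eq_le F_le ?psi0 ?phi0.
case/F_eq; rewrite ?psi0 ?phi0 //.
- by move/(psi_eq0 _ a0) => a_eq0; move: b0; rewrite a_eq0 ltxx.
- by move=> phia; move: (phi_gt0 _ b0); rewrite phia ltxx.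
Qed.

End CClass.

Section NonnegativeIntegrand.
Variables (R : realType) (f : R -> R).
Hypothesis f_ge0 : forall l, 0 <= l -> 0 <= f l.
Hypothesis f_int : forall a, 0 <= a -> (@lebesgue_measure R).-integrable `[0, a] (EFin \o f).

Lemma rint_ge0 d : 0 <= rint f 0 d.
Proof.
apply: Rintegral_ge0 => x /=; rewrite in_itv /= => /andP[x0 _]; exact: f_ge0.
Qed.

Lemma rint_le_rint d e : 0 <= d -> d <= e -> rint f 0 d <= rint f 0 e.
Proof.
move=> d0 de; rewrite /rint [in leRHS](@itv_bndbnd_setU _ _ _ (BRight d)) ?bnd_simp //.
rewrite Rintegral_setU //=.
- rewrite lerDl; apply: Rintegral_ge0 => x /=; rewrite in_itv /= => /andP[dx _].
  exact/f_ge0/(le_trans d0 (ltW dx)).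
- by rewrite -itv_bndbnd_setU ?bnd_simp //; exact: f_int (le_trans d0 de).
- apply/disj_set2P; rewrite -subset0 => z /=; rewrite !in_itv /= => -[/andP[_]].
  by rewrite leNgt => /negbTE ->.
Qed.

Variables (psi phi : R -> R) (F : R -> R -> R).
Hypotheses (hpsi : Psi_class psi) (hphi : Phi_u phi) (hF : C_class F).
Hypothesis rint_gt0 : forall e, 0 < e -> 0 < rint f 0 e.

Lemma C_class_rint_le d e : 0 <= d ->
  psi (rint f 0 e) <= F (psi (rint f 0 d)) (phi (rint f 0 d)) -> e <= d.
Proof.
move=> d0 contr; rewrite leNgt; apply/negP => de.
have := C_class_contractive_lt hpsi hphi hF (rint_ge0 d) (rint_gt0 (le_lt_trans d0 de)) contr.
by rewrite ltNge rint_le_rint // ltW.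
Qed.

End NonnegativeIntegrand.

Section IntegralsOnUnitInterval.
Variable R : realType.
Implicit Types (h : R -> R) (t : R).

Lemma in01_ge0 t : t \in `[0, 1] -> 0 <= t.
Proof. by rewrite in_itv /= => /andP[]. Qed.

Lemma subitv01 t s : t \in `[0, 1] -> s \in `[0, t] -> s \in `[0, 1].
Proof. by rewrite !in_itv /= => /andP[_ t1] /andP[-> /le_trans->]. Qed.

Lemma continuous01_integrable h t : {within `[0, 1], continuous h} -> t \in `[0, 1] ->
  (@lebesgue_measure R).-integrable `[0, t] (EFin \o h).
Proof.
move=> hc; rewrite in_itv /= => /andP[_ t1].
apply: continuous_compact_integrable; first exact: segment_compact.
by apply: continuous_subspaceW hc; apply: subset_itvl; rewrite bnd_simp.
Qed.

Lemma rint_continuous h : {within `[0, 1], continuous h} ->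
  {within `[0, 1], continuous (fun t => rint h 0 t)}.
Proof.
move=> hc; apply: parameterized_integral_continuous => //.
by apply: continuous01_integrable; rewrite // in_itv /= ler01 lexx.
Qed.

Lemma le_rint h1 h2 t :
  {within `[0, 1], continuous h1} -> {within `[0, 1], continuous h2} -> t \in `[0, 1] ->
  (forall s, s \in `[0, t] -> h1 s <= h2 s) -> rint h1 0 t <= rint h2 0 t.
Proof.
by move=> h1c h2c t01 h12; apply: le_Rintegral => //; exact: continuous01_integrable.
Qed.

Lemma rint_cst r t : 0 <= t -> rint (fun=> r) 0 t = r * t.
Proof.
move=> t0; rewrite /rint Rintegral_cst //.
have := @lebesgue_measure_itv R `[0, t]; rewrite /= => ->; rewrite lte_fin.
by case: ltgtP t0 => // [_ | <-] _; rewrite /= ?subr0 ?mulr0.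
Qed.

Lemma monomial_continuous (a : R) k :
  {within `[0, 1], continuous (fun s => a * s ^+ k)}.
Proof.
apply: continuous_subspaceT => s; apply: cvgM; [exact: cvg_cst | exact: exprn_continuous].
Qed.

Lemma rint_pow k t : 0 <= t -> rint (fun s => s ^+ k) 0 t = t ^+ k.+1 / k.+1%:R.
Proof.
rewrite le_eqVlt => /predU1P[<- | t0].
  by rewrite /rint set_itv1 Rintegral_set1 expr0n /= mul0r.
rewrite /rint /Rintegral (@continuous_FTC2 _ _ (fun x => x ^+ k.+1 / k.+1%:R)) //=.
- by rewrite expr0n /= mul0r subr0.
- by apply: continuous_subspaceT; exact: exprn_continuous.
- split.
  + by move=> y _; apply: derivableM => //; exact: exprn_derivable.
  + by apply: cvg_at_right_filter; apply: cvgM; [exact: exprn_continuous | exact: cvg_cst].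
  + by apply: cvg_at_left_filter; apply: cvgM; [exact: exprn_continuous | exact: cvg_cst].
- move=> x _; rewrite derive1Mr; last exact: exprn_derivable.
  by rewrite exp_derive1 /= -mulr_natl [_ *: _]mulrC -mulrA divff ?mulr1 // pnatr_eq0.
Qed.

Lemma exp_coeff_monomialE (M c : R) k :
  (fun s => M * exp_coeff (c * s) k) = (fun s => M * (c ^+ k / k`!%:R) * s ^+ k).
Proof. by apply/funext => s; rewrite exp_coeffE /= exprMn; ring. Qed.

Lemma exp_coeff_continuous (M c : R) k :
  {within `[0, 1], continuous (fun s => M * exp_coeff (c * s) k)}.
Proof. by rewrite exp_coeff_monomialE; exact: monomial_continuous. Qed.

Lemma rint_exp_coeff (M c t : R) k : 0 <= t ->
  c * rint (fun s => M * exp_coeff (c * s) k) 0 t = M * exp_coeff (c * t) k.+1.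
Proof.
move=> t0; rewrite exp_coeff_monomialE /rint RintegralZl //; last first.
  by apply: continuous_compact_integrable; [exact: segment_compact |
    apply: continuous_subspaceT; exact: exprn_continuous].
rewrite -/(rint _ 0 t) rint_pow // exp_coeffE /= factS natrM invfM !exprS exprMn.
ring.
Qed.

End IntegralsOnUnitInterval.

Section VectorIntegrals.
Variables (R : realType) (n : nat).
Implicit Types h : R -> 'rV[R]_n.

Lemma within_continuous_coord (A : set R) h i :
  {within A, continuous h} -> {within A, continuous (fun s => h s ord0 i)}.
Proof.
by apply: (@within_continuous_comp _ _ _ A h (fun v => v ord0 i)) => v _;
  exact: coord_continuous.
Qed.

Lemma within_continuous_norm {T : topologicalType} {V : normedModType R}
    (A : set T) (h : T -> V) :
  {within A, continuous h} -> {within A, continuous (fun s => `|h s|)}.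
Proof.
by apply: (@within_continuous_comp _ _ _ A h Num.norm) => v _; exact: norm_continuous.
Qed.

Lemma vint_continuous h : {within `[0, 1], continuous h} ->
  {within `[0, 1], continuous (fun t => vint h 0 t)}.
Proof.
move=> hc; apply/subspace_continuousP => t t01; apply: cvg_row => i.
by have /subspace_continuousP := rint_continuous (within_continuous_coord (i := i) hc); apply.
Qed.

Lemma vintB h1 h2 t : {within `[0, 1], continuous h1} -> {within `[0, 1], continuous h2} ->
  t \in `[0, 1] -> vint h1 0 t - vint h2 0 t = vint (fun s => h1 s - h2 s) 0 t.
Proof.
move=> h1c h2c t01; apply/rowP => i; rewrite !mxE /rint -RintegralB //.
  by apply: eq_Rintegral => s _; rewrite !mxE.
- exact: continuous01_integrable (within_continuous_coord (i := i) h1c) t01.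
- exact: continuous01_integrable (within_continuous_coord (i := i) h2c) t01.
Qed.

Lemma norm_vint_le h t : {within `[0, 1], continuous h} -> t \in `[0, 1] ->
  `|vint h 0 t| <= rint (fun s => `|h s|) 0 t.
Proof.
move=> hc t01; apply: row_norm_le; first by apply: Rintegral_ge0 => s _.
move=> i; rewrite mxE; apply: le_trans (le_normr_Rintegral _ _) _ => //.
  exact: continuous01_integrable (within_continuous_coord (i := i) hc) t01.
apply: le_rint => //; last by move=> s _; exact: row_coord_le_norm.
- exact/within_continuous_norm/(within_continuous_coord (i := i)).
- exact: within_continuous_norm.
Qed.

End VectorIntegrals.

Section Gronwall.
Variable R : realType.

Lemma ler_exp_coeff (x y : R) k : 0 <= x -> x <= y -> exp_coeff x k <= exp_coeff y k.
Proof.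
move=> x0 xy; rewrite !exp_coeffE /= ler_wpM2l ?invr_ge0 //.
by rewrite lerXn2r ?nnegrE // (le_trans x0).
Qed.

Lemma le0_cvg0 (x : R) (w : R^nat) : w @ \oo --> 0 -> (forall k, x <= w k) -> x <= 0.
Proof.
move=> w0 xw.
by apply: (closed_cvg [set y | x <= y] (@closed_ge _ x) _ 0 w0); exact: nearW.
Qed.

Lemma iterated_rint_le (u : nat -> R -> R) (M c : R) : 0 <= c ->
  (forall k, {within `[0, 1], continuous (u k)}) ->
  (forall t, t \in `[0, 1] -> u 0%N t <= M) ->
  (forall k t, t \in `[0, 1] -> u k.+1 t <= c * rint (u k) 0 t) ->
  forall k t, t \in `[0, 1] -> u k t <= M * exp_coeff (c * t) k.
Proof.
move=> c0 uc u0 uS; elim=> [|k IH] t t01.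
  by rewrite exp_coeffE /= expr0 fact0 invr1 !mulr1; exact: u0.
rewrite -rint_exp_coeff ?in01_ge0 //; apply: le_trans (uS k t t01) _.
apply: ler_wpM2l => //; apply: le_rint => //; first exact: exp_coeff_continuous.
by move=> s st; apply: IH; exact: subitv01 st.
Qed.

Lemma gronwall_le0 (u : R -> R) (c : R) : 0 <= c -> {within `[0, 1], continuous u} ->
  (forall t, t \in `[0, 1] -> u t <= c * rint u 0 t) -> forall t, t \in `[0, 1] -> u t <= 0.
Proof.
move=> c0 uc uS t t01.
have [tmax _ umax] := EVT_max ler01 uc.
have ule k : u t <= u tmax * exp_coeff (c * t) k.
  exact: (@iterated_rint_le (fun=> u) (u tmax) c c0 (fun=> uc) umax (fun=> uS) k t t01).
apply: le0_cvg0 ule; rewrite -(mulr0 (u tmax)); apply: cvgM; first exact: cvg_cst.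
exact: cvg_exp_coeff.
Qed.

End Gronwall.

Section Limits.
Variable R : realType.

Lemma cvg_comp_within {T : Type} {U V : topologicalType} {F : set_system T} {FF : Filter F}
    (B : set U) (h : T -> U) (k : U -> V) y :
  (\forall x \near F, B (h x)) -> h @ F --> y -> k @ within B (nbhs y) --> k y ->
  (k \o h) @ F --> k y.
Proof.
move=> FB hy ky W /ky; rewrite /within /= nbhs_simpl => /hy /=.
by apply: filterS2 FB => x Bhx /(_ Bhx).
Qed.

Lemma norm_lim_le {V : normedModType R} (w : nat -> V) L z B :
  w @ \oo --> L -> (\forall m \near \oo, `|w m - z| <= B) -> `|L - z| <= B.
Proof.
move=> wL wB; apply: (closed_cvg [set y | y <= B] (@closed_le _ B) wB).
by apply: cvg_norm; apply: cvgB wL (cvg_cst z).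
Qed.

Lemma norm_telescope_le {V : normedModType R} (w : nat -> V) k m :
  (k <= m)%N -> `|w m - w k| <= \sum_(k <= j < m) `|w j.+1 - w j|.
Proof. by move=> km; rewrite -telescope_sumr //; exact: ler_norm_sum. Qed.

Lemma within_continuous_uniform_limit {T : topologicalType} {V : normedModType R}
    (A : set T) (h : nat -> T -> V) (x : T -> V) (b : R^nat) :
  b @ \oo --> 0 -> (forall k, {within A, continuous (h k)}) ->
  (forall k t, A t -> `|x t - h k t| <= b k) -> {within A, continuous x}.
Proof.
move=> b0 hc xh; apply/subspace_continuousP => t At; apply/cvgrPdist_lt => e e0.
have e3 : 0 < e / 3 by rewrite divr_gt0.
have [k _ bk] := (cvgrPdist_lt _ _).1 b0 _ e3; have {bk} := bk k (leqnn k).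
rewrite sub0r normrN => /(le_lt_trans (ler_norm _)) bk.
have /subspace_continuousP /(_ t At) /cvgrPdist_lt /(_ _ e3) := hc k.
apply: filterS2 (near_withinT A _) => s As hks.
have := xh k t At; have := xh k s As; have := ler_distD (h k t) (x t) (x s).
have := ler_distD (h k s) (h k t) (x s).
rewrite /from_subspace /= in hks *; rewrite [`|h k s - x s|]distrC.
lra.
Qed.

End Limits.

Section SummableMajorant.
Variables (R : realType) (a : R^nat).
Hypotheses (a_ge0 : forall k, 0 <= a k) (a_summable : cvgn (series a)).

Definition series_tail k := limn (series a) - series a k.

Lemma series_tail_cvg0 : series_tail @ \oo --> 0.
Proof.
by rewrite -(subrr (limn (series a))); apply: cvgB; [exact: cvg_cst | exact: a_summable].
Qed.

Lemma sum_le_series_tail k m : (k <= m)%N -> \sum_(k <= j < m) a j <= series_tail k.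
Proof.
move=> km; rewrite -sub_series_geq // lerD2r.
apply: (nondecreasing_cvgn_le _ a_summable) => i j ij.
by rewrite -subr_ge0 sub_series_geq //; exact: sumr_ge0.
Qed.

Lemma telescope_le_series_tail {V : normedModType R} (w : nat -> V) (C : R) k m :
  0 <= C -> (forall j, `|w j.+1 - w j| <= C * a j) -> (k <= m)%N ->
  `|w m - w k| <= C * series_tail k.
Proof.
move=> C0 wa km; apply: le_trans (norm_telescope_le w km) _.
apply: le_trans (_ : _ <= C * \sum_(k <= j < m) a j) _.
  by rewrite mulr_sumr; apply: ler_sum => j _; exact: wa.
by rewrite ler_wpM2l // sum_le_series_tail.
Qed.

Lemma cvgn_of_series_tail p q (w : nat -> 'M[R]_(p, q)) :
  (forall k m, (k <= m)%N -> `|w m - w k| <= series_tail k) -> cvgn w.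
Proof.
move=> wtail; apply/cauchy_cvgP/cauchy_exP => e e0.
have [k _ tk] := (cvgrPdist_lt _ _).1 series_tail_cvg0 _ e0.
exists (w k); exists k => // m /= km; rewrite -ball_normE /= distrC.
apply: le_lt_trans (wtail _ _ km) _.
by move: (tk k (leqnn k)); rewrite sub0r normrN; exact: le_lt_trans (ler_norm _).
Qed.

End SummableMajorant.

Section Picard.
Variables (R : realType) (n : nat) (K : R -> 'rV[R]_n -> 'rV[R]_n) (g : R -> 'rV[R]_n).
Variable alpha : R.
Hypothesis K_cont : {within [set p : R * 'rV[R]_n | p.1 \in `[0, 1]],
  continuous (fun p => K p.1 p.2)}.
Hypothesis g_cont : {within `[0, 1], continuous g}.
Hypothesis alpha_le1 : alpha <= 1.

Definition picard_op (x : R -> 'rV[R]_n) t := g t + vint (fun s => K s (x s)) 0 t.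

Hypothesis K_enorm_le : forall x y : R -> 'rV[R]_n,
  {within `[0, 1], continuous x} -> {within `[0, 1], continuous y} ->
  forall t, t \in `[0, 1] ->
  alpha * enorm (x t - picard_op x t) <= enorm (x t - y t) ->
  enorm (K t (x t) - K t (y t)) <= enorm (x t - y t).

Implicit Types x y : R -> 'rV[R]_n.

Let c : R := n%:R + 1.
Let c_ge0 : 0 <= c. Proof. by rewrite addr_ge0. Qed.

Lemma K_comp_continuous x : {within `[0, 1], continuous x} ->
  {within `[0, 1], continuous (fun s => K s (x s))}.
Proof.
move=> /subspace_continuousP xc; apply/subspace_continuousP => s s01.
have pair_cvg : (fun s => (s, x s)) @ within `[0, 1] (nbhs s) --> (s, x s).
  apply: (@cvg_pair _ _ _ _ (nbhs s) (nbhs (x s)) _ _ _ id x); last exact: xc.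
  exact: cvg_within.
have pair_in : \forall t \near within `[0, 1] (nbhs s),
    [set p : R * 'rV[R]_n | p.1 \in `[0, 1]] (t, x t) by exact: near_withinT.
have /subspace_continuousP /(_ (s, x s) s01) := K_cont.
exact: cvg_comp_within pair_in pair_cvg.
Qed.

Lemma picard_op_continuous x : {within `[0, 1], continuous x} ->
  {within `[0, 1], continuous (picard_op x)}.
Proof.
by move=> xc; apply: within_continuousD g_cont _; exact/vint_continuous/K_comp_continuous.
Qed.

Lemma norm_picard_op_sub x y t :
  {within `[0, 1], continuous x} -> {within `[0, 1], continuous y} -> t \in `[0, 1] ->
  `|picard_op x t - picard_op y t| <= rint (fun s => `|K s (x s) - K s (y s)|) 0 t.
Proof.
move=> xc yc t01; rewrite /picard_op opprD addrACA subrr add0r vintB //;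
  try exact: K_comp_continuous.
by apply: norm_vint_le t01; apply: within_continuousB; exact: K_comp_continuous.
Qed.

Lemma norm_picard_op_sub_lipschitz x y t :
  {within `[0, 1], continuous x} -> {within `[0, 1], continuous y} -> t \in `[0, 1] ->
  (forall s, s \in `[0, t] -> `|K s (x s) - K s (y s)| <= c * `|x s - y s|) ->
  `|picard_op x t - picard_op y t| <= c * rint (fun s => `|x s - y s|) 0 t.
Proof.
move=> xc yc t01 Klip; have xyc := within_continuous_norm (within_continuousB xc yc).
apply: le_trans (norm_picard_op_sub xc yc t01) _.
rewrite /rint -RintegralZl //; last exact: continuous01_integrable xyc t01.
apply: le_rint => //.
- by apply/within_continuous_norm/within_continuousB; exact: K_comp_continuous.
- by apply: (within_continuous_comp _ _ ( *%R c) _ xyc) => r _; exact: mulrl_continuous.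
Qed.

Lemma K_lipschitz x y t :
  {within `[0, 1], continuous x} -> {within `[0, 1], continuous y} -> t \in `[0, 1] ->
  alpha * enorm (x t - picard_op x t) <= enorm (x t - y t) ->
  `|K t (x t) - K t (y t)| <= c * `|x t - y t|.
Proof.
move=> xc yc t01 trigger; apply: le_trans (row_norm_le_enorm _) _.
exact: le_trans (K_enorm_le xc yc t01 trigger) (enorm_le_row_norm _).
Qed.

Lemma K_lipschitz_picard_step x t : {within `[0, 1], continuous x} -> t \in `[0, 1] ->
  `|K t (picard_op x t) - K t (x t)| <= c * `|picard_op x t - x t|.
Proof.
move=> xc t01; rewrite distrC [`|picard_op x t - _|]distrC.
apply: K_lipschitz => //; first exact: picard_op_continuous.
by rewrite -{2}[enorm _]mul1r ler_wpM2r ?enorm_ge0.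
Qed.

Lemma K_lipschitz_fixed x y t :
  {within `[0, 1], continuous x} -> {within `[0, 1], continuous y} ->
  (forall s, s \in `[0, 1] -> x s = picard_op x s) -> t \in `[0, 1] ->
  `|K t (x t) - K t (y t)| <= c * `|x t - y t|.
Proof.
move=> xc yc xfix t01; apply: K_lipschitz => //.
by rewrite -xfix // subrr enorm0 mulr0 enorm_ge0.
Qed.

Lemma picard_fixed_point_unique x y t :
  {within `[0, 1], continuous x} -> {within `[0, 1], continuous y} ->
  (forall s, s \in `[0, 1] -> x s = picard_op x s) ->
  (forall s, s \in `[0, 1] -> y s = picard_op y s) -> t \in `[0, 1] -> x t = y t.
Proof.
move=> xc yc xfix yfix t01; apply/eqP; rewrite -subr_eq0 -normr_eq0 eq_le normr_ge0 andbT.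
apply: (@gronwall_le0 _ (fun s => `|x s - y s|) c c_ge0 _ _ t t01) => [|s s01].
  exact: within_continuous_norm (within_continuousB xc yc).
rewrite {1}xfix // {1}yfix //; apply: norm_picard_op_sub_lipschitz => // r rs.
exact: K_lipschitz_fixed (subitv01 s01 rs).
Qed.

Definition picard_iter k := iter k picard_op (fun=> 0).

Lemma picard_iter_continuous k : {within `[0, 1], continuous (picard_iter k)}.
Proof.
elim: k => [|k IH]; first by apply: continuous_subspaceT; exact: cst_continuous.
exact: picard_op_continuous.
Qed.

Lemma picard_iter_step_le : exists2 M, 0 <= M & forall k t, t \in `[0, 1] ->
  `|picard_iter k.+1 t - picard_iter k t| <= M * exp_coeff c k.
Proof.
pose u k t := `|picard_iter k.+1 t - picard_iter k t|.
have uc k : {within `[0, 1], continuous (u k)}.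
  by apply/within_continuous_norm/within_continuousB; exact: picard_iter_continuous.
have [tmax _ umax] := EVT_max ler01 (uc 0%N).
have uS k t : t \in `[0, 1] -> u k.+1 t <= c * rint (u k) 0 t.
  move=> t01; apply: (@norm_picard_op_sub_lipschitz (picard_iter k.+1) (picard_iter k))
    => // [||s st]; try exact: picard_iter_continuous.
  exact: K_lipschitz_picard_step (picard_iter_continuous (k := k)) (subitv01 t01 st).
exists (u 0%N tmax) => [|k t t01]; first exact: normr_ge0.
apply: le_trans (iterated_rint_le c_ge0 uc umax uS k t01) _.
rewrite ler_wpM2l ?normr_ge0 // ler_exp_coeff ?mulr_ge0 ?(in01_ge0 t01) //.
by rewrite -[leRHS]mulr1 ler_wpM2l //; move: t01; rewrite in_itv /= => /andP[].
Qed.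

Definition picard_limit t := limn (fun k => picard_iter k t).

Section Convergence.
Variable M : R.
Hypothesis M_ge0 : 0 <= M.
Hypothesis picard_step_le : forall k t, t \in `[0, 1] ->
  `|picard_iter k.+1 t - picard_iter k t| <= M * exp_coeff c k.

Let a k := M * exp_coeff c k.
Let a_ge0 k : 0 <= a k. Proof. by rewrite mulr_ge0 ?exp_coeff_ge0. Qed.
Let a_summable : cvgn (series a).
Proof. exact: is_cvg_seriesZ (is_cvg_series_exp_coeff c). Qed.
Let tail := series_tail a.

Lemma picard_iter_dist_le k m t : (k <= m)%N -> t \in `[0, 1] ->
  `|picard_iter m t - picard_iter k t| <= tail k.
Proof.
move=> km t01; rewrite -[tail k]mul1r.
apply: (telescope_le_series_tail a_ge0 a_summable (w := picard_iter ^~ t) ler01 _ km) => j.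
by rewrite mul1r; exact: picard_step_le.
Qed.

Lemma picard_iter_cvg t : t \in `[0, 1] -> (fun k => picard_iter k t) @ \oo --> picard_limit t.
Proof.
move=> t01; exact: (cvgn_of_series_tail a_summable (fun k m km => picard_iter_dist_le km t01)).
Qed.

Lemma picard_limit_dist_le k t : t \in `[0, 1] -> `|picard_limit t - picard_iter k t| <= tail k.
Proof.
move=> t01; apply: norm_lim_le (picard_iter_cvg t01) _.
by exists k => // m /= km; exact: picard_iter_dist_le.
Qed.

Lemma picard_limit_continuous : {within `[0, 1], continuous picard_limit}.
Proof.
apply: (within_continuous_uniform_limit (series_tail_cvg0 a_summable)) => k.
  exact: picard_iter_continuous.
by move=> t t01; exact: picard_limit_dist_le.
Qed.

(* The trigger is not available for the pair (limit, iterate), so instead of the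
   Lipschitz bound we pass to the limit in the telescoped bound, using continuity of K. *)
Lemma K_picard_limit_dist_le k s : s \in `[0, 1] ->
  `|K s (picard_limit s) - K s (picard_iter k s)| <= c * tail k.
Proof.
move=> s01.
have pair_cvg : (fun m => (s, picard_iter m s)) @ \oo --> (s, picard_limit s).
  apply: (@cvg_pair _ _ _ _ (nbhs s) (nbhs (picard_limit s)) _ _ _ (fun=> s) (picard_iter ^~ s)).
    exact: cvg_cst.
  exact: picard_iter_cvg.
have pair_in : \forall m \near \oo,
    [set p : R * 'rV[R]_n | p.1 \in `[0, 1]] (s, picard_iter m s) by exact: nearW.
have /subspace_continuousP /(_ (s, picard_limit s) s01) := K_cont.
move/(cvg_comp_within pair_in pair_cvg) => K_cvg.
apply: norm_lim_le K_cvg _; exists k => // m /= km.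
apply: (telescope_le_series_tail a_ge0 a_summable (w := fun j => K s (picard_iter j s)) c_ge0 _ km).
move=> j.
apply: le_trans (K_lipschitz_picard_step (picard_iter_continuous (k := j)) s01) _.
by apply: ler_wpM2l => //; exact: picard_step_le.
Qed.

Lemma picard_limit_fixed t : t \in `[0, 1] -> picard_limit t = picard_op picard_limit t.
Proof.
move=> t01; apply/eqP; rewrite -subr_eq0 -normr_eq0 eq_le normr_ge0 andbT.
apply: (@le0_cvg0 _ _ (fun k => tail k.+1 + c * tail k * t)) => [|k].
  rewrite (_ : 0 = 0 + c * 0 * t); last by rewrite mulr0 mul0r addr0.
  have tail0 := series_tail_cvg0 a_summable.
  apply: cvgD; first by rewrite cvg_shiftS.
  by apply: cvgM; [apply: cvgM; [exact: cvg_cst | exact: tail0] | exact: cvg_cst].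
apply: le_trans (ler_distD (picard_iter k.+1 t) _ _) _.
apply: lerD; first exact: picard_limit_dist_le.
apply: le_trans (norm_picard_op_sub (picard_iter_continuous (k := k)) picard_limit_continuous t01) _.
rewrite -rint_cst ?in01_ge0 //; apply: le_rint => //.
- by apply/within_continuous_norm/within_continuousB; apply: K_comp_continuous;
    [exact: picard_iter_continuous | exact: picard_limit_continuous].
- by apply: continuous_subspaceT; exact: cst_continuous.
- by move=> s st; rewrite distrC; exact: K_picard_limit_dist_le (subitv01 t01 st).
Qed.

End Convergence.

Lemma picard_fixed_point_exists : exists2 x : R -> 'rV[R]_n,
  {within `[0, 1], continuous x} & forall t, t \in `[0, 1] -> x t = picard_op x t.
Proof.
have [M M_ge0 step_le] := picard_iter_step_le.
by exists picard_limit; [exact: picard_limit_continuous step_le | exact: picard_limit_fixed step_le].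
Qed.

End Picard.

Theorem theorem4p6 (R : realType) (n : nat)
  (K : R -> 'rV[R]_n -> 'rV[R]_n) (g : R -> 'rV[R]_n) (f : R -> R)
  (alpha : R) (psi phi : R -> R) (F : R -> R -> R) :
  {within [set p : R * 'rV[R]_n | p.1 \in `[0, 1]],
     continuous (fun p => K p.1 p.2)} ->
  {within `[0, 1], continuous g} ->
  (forall l, 0 <= l -> 0 < f l) ->
  (forall a, 0 <= a -> (@lebesgue_measure R).-integrable `[0, a] (EFin \o f)) ->
  (forall e, 0 < e -> 0 < rint f 0 e) ->
  0 < alpha -> alpha <= 1 / 2 ->
  Psi_class psi -> Phi_u phi -> C_class F ->
  (forall x y : R -> 'rV[R]_n,
     {within `[0, 1], continuous x} -> {within `[0, 1], continuous y} ->
     forall t, t \in `[0, 1] ->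
       alpha * enorm (x t - g t - vint (fun s => K s (x s)) 0 t) <= enorm (x t - y t) ->
       psi (rint f 0 (enorm (K t (x t) - K t (y t))))
         <= F (psi (rint f 0 (enorm (x t - y t))))
              (phi (rint f 0 (enorm (x t - y t))))) ->
  exists x : R -> 'rV[R]_n,
    [/\ {within `[0, 1], continuous x},
        (forall t, t \in `[0, 1] -> x t = g t + vint (fun s => K s (x s)) 0 t) &
        (forall y : R -> 'rV[R]_n, {within `[0, 1], continuous y} ->
           (forall t, t \in `[0, 1] -> y t = g t + vint (fun s => K s (y s)) 0 t) ->
           forall t, t \in `[0, 1] -> y t = x t)].
Proof.
move=> K_cont g_cont f_gt0 f_int rint_gt0 _ alpha_le_half psi_cls phi_cls F_cls contractive.
have alpha_le1 : alpha <= 1 by lra.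
have f_ge0 l : 0 <= l -> 0 <= f l by move/f_gt0/ltW.
have K_enorm_le (x y : R -> 'rV[R]_n) :
    {within `[0, 1], continuous x} -> {within `[0, 1], continuous y} ->
    forall t, t \in `[0, 1] -> alpha * enorm (x t - picard_op K g x t) <= enorm (x t - y t) ->
    enorm (K t (x t) - K t (y t)) <= enorm (x t - y t).
  move=> xc yc t t01 trigger.
  apply: (C_class_rint_le f_ge0 f_int psi_cls phi_cls F_cls rint_gt0 (enorm_ge0 _)).
  by apply: contractive => //; rewrite -addrA -opprD.
have [x xc xfix] := picard_fixed_point_exists K_cont g_cont alpha_le1 K_enorm_le.
exists x; split=> // y yc yfix t t01.
apply: (picard_fixed_point_unique K_cont K_enorm_le yc xc _ xfix t01).
exact: yfix.
Qed.
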